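(* Let $A\in\mathbb{R}^{m\times n}$ with columns $A_1,\dots,A_n$, let $y\in\mathbb{R}^m$, $\gamma>0$ and $\mu\ge 0$. Let $x^*$ be an optimal solution of (CR) with optimal value $\zeta_{CR}$, set $\varepsilon^*=y-Ax^*$ and $\delta_i=(A_i'\varepsilon^* )^2$ for $i=1,\dots,n$, and let $\bar\zeta$ be any number with $\bar\zeta\ge\zeta_R$. Then every optimal solution $(x,z)$ of (MIPR) satisfies, for each $i$: $z_i=0$ if $\zeta_{CR}+\mu-\gamma\delta_i>\bar\zeta$, and $z_i=1$ if $\zeta_{CR}-\mu+\gamma\delta_i>\bar\zeta$.
   Context: For $x_i\in\mathbb{R}$, $z_i\ge 0$ the perspective term $x_i^2/z_i$ is defined with the convention $x_i^2/z_i=0$ if $x_i=z_i=0$ and $x_i^2/z_i=+\infty$ if $z_i=0$, $x_i\neq 0$. (MIPR) is the problem $\zeta_R=\min_{x,z}\ \|y-Ax\|_2^2+\frac1\gamma\sum_{i=1}^n \frac{x_i^2}{z_i}+\mu\sum_{i=1}^n z_i$ subject to $x_i(1-z_i)=0$ for $i=1,\dots,n$, $x\in\mathbb{R}^n$, $z\in\{0,1\}^n$ (a mixed-integer formulation of $\min_x \|y-Ax\|_2^2+\frac1\gamma\|x\|_2^2+\mu\|x\|_0$). (CR) is its convex (perspective) relaxation: $\zeta_{CR}=\min_{x,z}\ \|y-Ax\|_2^2+\frac1\gamma\sum_{i=1}^n \frac{x_i^2}{z_i}+\mu\sum_{i=1}^n z_i$ subject to $x\in\mathbb{R}^n$, $z\in[0,1]^n$;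 an optimal solution $x^*$ means the $x$-part of an optimal pair $(x^*,z^* )$. $A_i'$ denotes the transpose of the $i$-th column of $A$. *)

From HB Require Import structures.
From mathcomp Require Import all_boot all_order all_algebra.
From mathcomp Require Import all_classical all_reals ereal.
Set Implicit Arguments. Unset Strict Implicit. Unset Printing Implicit Defensive.
Import Order.TTheory GRing.Theory Num.Theory.
Local Open Scope ring_scope.
Local Open Scope ereal_scope.
Local Open Scope classical_set_scope.

Definition persp (R : realType) (xi zi : R) : \bar R :=
  if zi == 0%R then (if xi == 0%R then 0 else +oo) else ((xi ^+ 2 / zi)%R)%:E.

Definition sqnorm (R : realType) (m : nat) (v : 'cV[R]_m) : R :=
  (\sum_(j < m) v j ord0 ^+ 2)%R.

(* common objective of (MIPR) and (CR) *)
Definition obj (R : realType) (m n : nat) (A : 'M[R]_(m, n)) (y : 'cV[R]_m)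
    (gamma mu : R) (x z : 'cV[R]_n) : \bar R :=
  (sqnorm (y - A *m x))%:E
  + (gamma^-1)%:E * (\sum_(i < n) persp (x i ord0) (z i ord0))
  + ((mu * \sum_(i < n) z i ord0)%R)%:E.

Definition CR_feasible (R : realType) (n : nat) (x z : 'cV[R]_n) : Prop :=
  forall i, (0 <= z i ord0 <= 1)%R.

Definition MIPR_feasible (R : realType) (n : nat) (x z : 'cV[R]_n) : Prop :=
  forall i, (z i ord0 = 0%R \/ z i ord0 = 1%R) /\ (x i ord0 * (1 - z i ord0) = 0)%R.

Definition CR_optimal (R : realType) (m n : nat) (A : 'M[R]_(m, n)) (y : 'cV[R]_m)
    (gamma mu : R) (x z : 'cV[R]_n) : Prop :=
  CR_feasible x z /\
  forall x' z', CR_feasible x' z' -> obj A y gamma mu x z <= obj A y gamma mu x' z'.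

Definition MIPR_optimal (R : realType) (m n : nat) (A : 'M[R]_(m, n)) (y : 'cV[R]_m)
    (gamma mu : R) (x z : 'cV[R]_n) : Prop :=
  MIPR_feasible x z /\
  forall x' z', MIPR_feasible x' z' -> obj A y gamma mu x z <= obj A y gamma mu x' z'.

Definition zeta_R (R : realType) (m n : nat) (A : 'M[R]_(m, n)) (y : 'cV[R]_m)
    (gamma mu : R) : \bar R :=
  ereal_inf [set v | exists (x z : 'cV[R]_n),
               MIPR_feasible x z /\ obj A y gamma mu x z = v].

Definition delta (R : realType) (m n : nat) (A : 'M[R]_(m, n)) (eps : 'cV[R]_m)
    (i : 'I_n) : R :=
  (((col i A)^T *m eps) ord0 ord0 ^+ 2)%R.

From HB Require Import structures.
From mathcomp Require Import all_boot all_order all_algebra.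
From mathcomp Require Import all_classical all_reals ereal.
From mathcomp Require Import ring lra.
Import Order.TTheory GRing.Theory Num.Theory.
Set Implicit Arguments. Unset Strict Implicit. Unset Printing Implicit Defensive.
Local Open Scope ring_scope.

(* Write the common objective as ||y - Ax||^2 + sum_j pen(x_j, z_j) with the
   per-coordinate penalty pen(s, w) = gamma^-1 s^2/w + mu w.  The perspective
   s^2/w is jointly convex (it is subadditive and positively homogeneous), so
   pen is convex.  Moving one coordinate of an optimal point (xs, zs) of (CR)
   along a segment towards any feasible (u, v) therefore yields the
   first-order condition
        2 a_j (u - xs_j) <= pen(u, v) - pen(xs_j, zs_j),   a_j = A_j' (y - A xs).
   Combined with the gradient inequality for ||y - Ax||^2 this gives, for
   every feasible (x, z) and every index i,
        obj(x, z) - zeta_CR >= pen(x_i, z_i) - pen(xs_i, zs_i) - 2 a_i (x_i - xs_i).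
   Instantiating the first-order condition at (0, 0) and at (gamma a_i, 1)
   and completing a square then shows that an optimal (x, z) of (MIPR) with
   the "wrong" value of z_i would have objective value larger than zbar. *)

(* The perspective s^2/w as a real number; in a field w = 0 gives 0, which
   agrees with [persp] on points satisfying (w = 0 -> s = 0). *)
Definition perspR (R : fieldType) (s w : R) : R := s ^+ 2 / w.

Lemma perspRZ (R : fieldType) (t s w : R) : perspR (t * s) (t * w) = t * perspR s w.
Proof.
rewrite /perspR; have [->|t0] := eqVneq t 0; first by rewrite !mul0r expr0n /= mul0r.
have [->|w0] := eqVneq w 0; first by rewrite mulr0 !invr0 !mulr0.
by field; rewrite t0 w0.
Qed.

(* Subadditivity: (s1 + s2)^2/(w1 + w2) <= s1^2/w1 + s2^2/w2, the defect being
   (s1 w2 - s2 w1)^2 / (w1 w2 (w1 + w2)). *)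
Lemma perspR_subadd (R : realFieldType) (s1 w1 s2 w2 : R) :
  0 <= w1 -> 0 <= w2 -> (w1 = 0 -> s1 = 0) -> (w2 = 0 -> s2 = 0) ->
  perspR (s1 + s2) (w1 + w2) <= perspR s1 w1 + perspR s2 w2.
Proof.
move=> w1_ge0 w2_ge0 hs1 hs2; rewrite /perspR.
have [w10|w1n0] := eqVneq w1 0.
  by rewrite w10 (hs1 w10) !add0r expr0n /= mul0r add0r.
have [w20|w2n0] := eqVneq w2 0.
  by rewrite w20 (hs2 w20) !addr0 expr0n /= mul0r addr0.
have w1_gt0 : 0 < w1 by rewrite lt_def w1n0.
have w2_gt0 : 0 < w2 by rewrite lt_def w2n0.
have w12n0 : w1 + w2 != 0 by rewrite gt_eqF ?addr_gt0.
rewrite -subr_ge0.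
have -> : s1 ^+ 2 / w1 + s2 ^+ 2 / w2 - (s1 + s2) ^+ 2 / (w1 + w2) =
    (s1 * w2 - s2 * w1) ^+ 2 / (w1 * w2 * (w1 + w2)).
  by field; rewrite w1n0 w2n0 w12n0.
by rewrite divr_ge0 ?sqr_ge0 // !mulr_ge0 // addr_ge0.
Qed.

Lemma supp_scale (R : idomainType) (c s w : R) :
  (w = 0 -> s = 0) -> c * w = 0 -> c * s = 0.
Proof.
by move=> hs /eqP; rewrite mulf_eq0 => /orP[/eqP->|/eqP/hs->]; rewrite ?mul0r ?mulr0.
Qed.

Lemma perspR_convex (R : realFieldType) (t s w u v : R) :
  0 <= t <= 1 -> 0 <= w -> 0 <= v -> (w = 0 -> s = 0) -> (v = 0 -> u = 0) ->
  perspR ((1 - t) * s + t * u) ((1 - t) * w + t * v)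
    <= (1 - t) * perspR s w + t * perspR u v.
Proof.
move=> /andP[t0 t1] w0 v0 hs hu; rewrite -!perspRZ.
apply: perspR_subadd; rewrite ?mulr_ge0 ?subr_ge0 //; exact: supp_scale.
Qed.

Lemma supp_convex (R : realFieldType) (t s w u v : R) :
  0 <= t <= 1 -> 0 <= w -> 0 <= v -> (w = 0 -> s = 0) -> (v = 0 -> u = 0) ->
  (1 - t) * w + t * v = 0 -> (1 - t) * s + t * u = 0.
Proof.
move=> /andP[t0 t1] w0 v0 hs hu /eqP.
rewrite paddr_eq0 ?mulr_ge0 ?subr_ge0 // => /andP[/eqP hw /eqP hv].
by rewrite (supp_scale hs hw) (supp_scale hu hv) addr0.
Qed.

(* Segment argument: if b + t c >= 0 for all t in (0, 1), then b >= 0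
   (take t = -b / (2 (|c| - b)) when b < 0). *)
Lemma ge0_of_segment (R : realFieldType) (b c : R) :
  (forall t, 0 < t -> t < 1 -> 0 <= b + t * c) -> 0 <= b.
Proof.
move=> H; rewrite leNgt; apply/negP => b_lt0.
have c_ge0 := normr_ge0 c.
have den_gt0 : 0 < 2 * (`|c| - b) by lra.
pose t := - b / (2 * (`|c| - b)).
have ht : t * (2 * (`|c| - b)) = - b by rewrite divfK // gt_eqF.
have t_gt0 : 0 < t by rewrite divr_gt0 // oppr_gt0.
have t_lt1 : t < 1 by rewrite ltr_pdivrMr // mul1r; lra.
have tc : t * c <= t * `|c| by rewrite ler_pM2l // ler_norm.
have := H t t_gt0 t_lt1; nra.
Qed.

Definition setc (R : pzRingType) (n : nat) (v : 'cV[R]_n) (j : 'I_n) (b : R) : 'cV[R]_n :=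
  \col_k (if k == j then b else v k ord0).

Lemma setcE (R : pzRingType) n (v : 'cV[R]_n) j b k :
  setc v j b k ord0 = if k == j then b else v k ord0.
Proof. by rewrite mxE. Qed.

Lemma setcD (R : pzRingType) n (v : 'cV[R]_n) j b :
  setc v j b = v + (b - v j ord0) *: delta_mx j ord0.
Proof.
apply/matrixP => k l; rewrite (ord1 l) !mxE eqxx andbT.
by case: eqP => [->|_]; rewrite ?mulr1 ?mulr0 ?addr0 // addrC subrK.
Qed.

Lemma sum_setc (R : pzRingType) n (f : R -> R -> R) (x z : 'cV[R]_n) j b c :
  \sum_(k < n) f (setc x j b k ord0) (setc z j c k ord0) =
  \sum_(k < n) f (x k ord0) (z k ord0) - f (x j ord0) (z j ord0) + f b c.
Proof.
rewrite (bigD1 j) //= [in RHS](bigD1 j) //= !setcE eqxx.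
rewrite (eq_bigr (fun k => f (x k ord0) (z k ord0))); last first.
  by move=> k kj; rewrite !setcE (negbTE kj).
by rewrite [f (x j ord0) _ + _]addrC addrK addrC.
Qed.

Definition dot (R : pzRingType) m (u v : 'cV[R]_m) : R := \sum_(k < m) u k ord0 * v k ord0.

Lemma deltaE (R : realType) m n (A : 'M[R]_(m, n)) (e : 'cV[R]_m) j :
  delta A e j = dot (col j A) e ^+ 2.
Proof. by rewrite /delta /dot !mxE; congr (_ ^+ 2); apply: eq_bigr => k _; rewrite !mxE. Qed.

Lemma sqnorm_subZ (R : realType) m (v w : 'cV[R]_m) (c : R) :
  sqnorm (v - c *: w) = sqnorm v - 2 * c * dot w v + c ^+ 2 * sqnorm w.
Proof.
rewrite /sqnorm /dot (eq_bigr (fun k => v k ord0 ^+ 2 - 2 * c * (w k ord0 * v k ord0)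
    + c ^+ 2 * w k ord0 ^+ 2)); last by move=> k _; rewrite !mxE; ring.
by rewrite !big_split /= sumrN -!mulr_sumr.
Qed.

Lemma sqnorm_sub_ge (R : realType) m (v w : 'cV[R]_m) :
  sqnorm v - 2 * dot w v <= sqnorm (v - w).
Proof.
have := sqnorm_subZ v w 1; rewrite scale1r mulr1 expr1n mul1r => ->.
by rewrite lerDl /sqnorm sumr_ge0 // => k _; rewrite sqr_ge0.
Qed.

Lemma dot_mulmx (R : realType) m n (A : 'M[R]_(m, n)) (d : 'cV[R]_n) (e : 'cV[R]_m) :
  dot (A *m d) e = \sum_(j < n) d j ord0 * dot (col j A) e.
Proof.
rewrite /dot (eq_bigr (fun k => \sum_(j < n) d j ord0 * (A k j * e k ord0))); last first.
  by move=> k _; rewrite mxE mulr_suml; apply: eq_bigr => j _; ring.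
rewrite exchange_big /=; apply: eq_bigr => j _; rewrite mulr_sumr.
by apply: eq_bigr => k _; rewrite !mxE.
Qed.

Lemma residual_setc (R : realType) m n (A : 'M[R]_(m, n)) (y : 'cV[R]_m) x j b :
  y - A *m setc x j b = (y - A *m x) - (b - x j ord0) *: col j A.
Proof. by rewrite setcD mulmxDr -scalemxAr -colE opprD addrA. Qed.

Section Objective.
Variables (R : realType) (m n : nat) (A : 'M[R]_(m, n)) (y : 'cV[R]_m) (gamma mu : R).
Hypothesis gamma_gt0 : 0 < gamma.

Definition pen (s w : R) : R := gamma^-1 * perspR s w + mu * w.

(* Real-valued objective, valid where the perspective terms are finite. *)
Definition objR (x z : 'cV[R]_n) : R :=
  sqnorm (y - A *m x) + \sum_(j < n) pen (x j ord0) (z j ord0).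

Definition persp_finite (x z : 'cV[R]_n) : Prop :=
  forall j, z j ord0 = 0 -> x j ord0 = 0.

Lemma objE (x z : 'cV[R]_n) : persp_finite x z -> obj A y gamma mu x z = (objR x z)%:E.
Proof.
move=> fin; rewrite /obj /objR /pen.
rewrite (eq_bigr (fun j => (perspR (x j ord0) (z j ord0))%:E)); last first.
  move=> j _; rewrite /persp /perspR; case: eqP => [zj0|//].
  by rewrite (fin j zj0) eqxx zj0 expr0n /= mul0r.
by rewrite sumEFin -EFinM -!EFinD big_split /= -!mulr_sumr addrA.
Qed.

Lemma pen00 : pen 0 0 = 0.
Proof. by rewrite /pen /perspR expr0n /= mul0r !mulr0 addr0. Qed.

Lemma pen_convex (t s w u v : R) :
  0 <= t <= 1 -> 0 <= w -> 0 <= v -> (w = 0 -> s = 0) -> (v = 0 -> u = 0) ->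
  pen ((1 - t) * s + t * u) ((1 - t) * w + t * v)
    <= (1 - t) * pen s w + t * pen u v.
Proof.
move=> t01 w0 v0 hs hu; rewrite /pen.
have gi_ge0 : 0 <= gamma^-1 by rewrite invr_ge0 ltW.
have := ler_wpM2l gi_ge0 (perspR_convex t01 w0 v0 hs hu); nra.
Qed.

Lemma pen1_lb (s a : R) : mu - gamma * a ^+ 2 <= pen s 1 - 2 * a * s.
Proof.
rewrite /pen /perspR divr1 mulr1 -subr_ge0.
have -> : gamma^-1 * s ^+ 2 + mu - 2 * a * s - (mu - gamma * a ^+ 2) =
    gamma^-1 * (s - gamma * a) ^+ 2 by field; rewrite gt_eqF.
by rewrite mulr_ge0 ?sqr_ge0 // invr_ge0 ltW.
Qed.

Lemma objR_setc (x z : 'cV[R]_n) (j : 'I_n) (s w : R) :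
  objR (setc x j s) (setc z j w) =
  objR x z - 2 * (s - x j ord0) * dot (col j A) (y - A *m x)
    + (s - x j ord0) ^+ 2 * sqnorm (col j A) + pen s w - pen (x j ord0) (z j ord0).
Proof.
rewrite /objR residual_setc sqnorm_subZ (sum_setc pen).
by rewrite /dot (eq_bigr (fun k => col j A k ord0 * (y - A *m x) k ord0)) //; ring.
Qed.

Lemma CR_feasible_setc (x z : 'cV[R]_n) (j : 'I_n) (s w : R) :
  CR_feasible x z -> 0 <= w <= 1 -> CR_feasible (setc x j s) (setc z j w).
Proof. by move=> feas w01 k; rewrite setcE; case: eqP. Qed.

Lemma persp_finite_setc (x z : 'cV[R]_n) (j : 'I_n) (s w : R) :
  persp_finite x z -> (w = 0 -> s = 0) -> persp_finite (setc x j s) (setc z j w).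
Proof. by move=> fin hs k; rewrite !setcE; case: eqP => _; [exact: hs | exact: fin]. Qed.

(* An optimal point of (CR) has finite objective, since (0, 0) is feasible
   with finite objective; hence all its perspective terms are finite. *)
Lemma CR_optimal_finite (xs zs : 'cV[R]_n) :
  CR_optimal A y gamma mu xs zs -> persp_finite xs zs.
Proof.
move=> [feas opt] j zj0; apply/eqP; apply: contraT => xj0.
have zero_fin : persp_finite 0 0 by move=> k _; rewrite mxE.
have := opt 0 0 (fun k => ltac:(by rewrite mxE lexx ler01)).
rewrite (objE zero_fin) leNgt => /negbTE <-.
have sum_ge0 : (0 <= \sum_(k < n | k != j) persp (xs k ord0) (zs k ord0))%E.
  apply: sume_ge0 => k _; have /andP[zk0 _] := feas k.
  rewrite /persp; case: eqP => _; first by case: eqP.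
  by rewrite lee_fin divr_ge0 // sqr_ge0.
rewrite /obj (bigD1 j) //= {1}/persp zj0 eqxx (negbTE xj0) addye; last first.
  by apply/negP => /eqP h; rewrite h in sum_ge0.
by rewrite gt0_muley ?lte_fin ?invr_gt0 // addey // addye // ltry.
Qed.

(* First-order optimality of (CR) in a single coordinate: compare the optimum
   with the points on the segment towards any admissible coordinate value (u, v). *)
Lemma CR_first_order (xs zs : 'cV[R]_n) (j : 'I_n) (u v : R) :
  CR_optimal A y gamma mu xs zs -> 0 <= v <= 1 -> (v = 0 -> u = 0) ->
  2 * dot (col j A) (y - A *m xs) * (u - xs j ord0)
    <= pen u v - pen (xs j ord0) (zs j ord0).
Proof.
move=> xs_opt v01 hu; have fin := CR_optimal_finite xs_opt.
case: xs_opt => feas opt; have /andP[w0 _] := feas j; have /andP[v0 _] := v01.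
rewrite -subr_ge0.
apply: (@ge0_of_segment _ _ ((u - xs j ord0) ^+ 2 * sqnorm (col j A))) => t t0 t1.
have t01 : 0 <= t <= 1 by rewrite !ltW.
pose s := (1 - t) * xs j ord0 + t * u; pose w := (1 - t) * zs j ord0 + t * v.
have w01 : 0 <= w <= 1 by have := feas j; case/andP: v01; rewrite /w; nra.
have hws : w = 0 -> s = 0 := supp_convex t01 w0 v0 (fin j) hu.
have := opt _ _ (CR_feasible_setc j s feas w01).
rewrite !objE //; last exact: persp_finite_setc.
rewrite lee_fin objR_setc.
have -> : s - xs j ord0 = t * (u - xs j ord0) by rewrite /s; ring.
have := pen_convex t01 w0 v0 (fin j) hu; rewrite -/s -/w.
move=> hpen hopt; rewrite -(pmulr_rge0 _ t0); nra.
Qed.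

Lemma objR_gap_lb (xs zs x z : 'cV[R]_n) (i : 'I_n) :
  CR_optimal A y gamma mu xs zs -> CR_feasible x z -> persp_finite x z ->
  pen (x i ord0) (z i ord0) - pen (xs i ord0) (zs i ord0)
    - 2 * ((x i ord0 - xs i ord0) * dot (col i A) (y - A *m xs))
  <= objR x z - objR xs zs.
Proof.
move=> xs_opt feas fin; set e := y - A *m xs.
pose g j := pen (x j ord0) (z j ord0) - pen (xs j ord0) (zs j ord0)
    - 2 * ((x j ord0 - xs j ord0) * dot (col j A) e).
have g_ge0 j : 0 <= g j.
  have := CR_first_order j xs_opt (feas j) (fin j); rewrite /g -/e; lra.
have sq_lb : sqnorm e - 2 * \sum_(j < n) (x j ord0 - xs j ord0) * dot (col j A) e
    <= sqnorm (y - A *m x).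
  have -> : y - A *m x = e - A *m (x - xs) by rewrite /e mulmxBr opprB addrA subrK.
  rewrite (eq_bigr (fun j => (x - xs) j ord0 * dot (col j A) e)); last first.
    by move=> j _; rewrite !mxE.
  by rewrite -dot_mulmx sqnorm_sub_ge.
have : g i <= \sum_(j < n) g j by rewrite (bigD1 i) //= lerDl sumr_ge0.
rewrite /g !sumrB -mulr_sumr /objR; lra.
Qed.

End Objective.

Local Open Scope ereal_scope.

Theorem proposition1 (R : realType) (m n : nat) (A : 'M[R]_(m, n)) (y : 'cV[R]_m)
    (gamma mu : R) (xs zs : 'cV[R]_n) (zbar : R) :
  (0 < gamma)%R -> (0 <= mu)%R ->
  CR_optimal A y gamma mu xs zs ->
  zeta_R A y gamma mu <= zbar%:E ->
  forall x z : 'cV[R]_n, MIPR_optimal A y gamma mu x z ->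
  forall i : 'I_n,
    let zetaCR := obj A y gamma mu xs zs in
    let d := delta A (y - A *m xs) i in
    (zetaCR + (mu - gamma * d)%:E > zbar%:E -> z i ord0 = 0%R) /\
    (zetaCR + (- mu + gamma * d)%:E > zbar%:E -> z i ord0 = 1%R).
Proof.
move=> gamma_gt0 _ xs_opt zR x z [xz_feas xz_opt] i zetaCR d.
have xs_fin := CR_optimal_finite gamma_gt0 xs_opt.
have xz_fin : persp_finite x z.
  by move=> j zj0; have [_] := xz_feas j; rewrite zj0 subr0 mulr1.
have xz_CR : CR_feasible x z.
  by move=> j; have [[->|->] _] := xz_feas j; rewrite ?lexx ?ler01.
have xz_le : (objR A y gamma mu x z <= zbar)%R.
  rewrite -lee_fin -objE //; apply: le_trans zR.
  by apply/ereal_infP => v [x' [z' [f <-]]]; exact: xz_opt.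
have lb := objR_gap_lb gamma_gt0 i xs_opt xz_CR xz_fin.
set a := dot (col i A) (y - A *m xs) in lb.
(* First-order conditions at (0, 0) and at (gamma a, 1), the minimiser in
   [pen1_lb]: they bound pen(xs_i, zs_i) - 2 a xs_i above by 0 and by
   mu - gamma a^2 respectively. *)
have at0 := CR_first_order gamma_gt0 i (u := 0) (v := 0) xs_opt
  ltac:(by rewrite lexx ler01) (fun _ => erefl).
have at1 := CR_first_order gamma_gt0 i (u := gamma * a) (v := 1) xs_opt
  ltac:(by rewrite ler01 lexx) ltac:(by move/eqP; rewrite oner_eq0).
have pen_top : pen gamma mu (gamma * a) 1 = (mu + gamma * a ^+ 2)%R.
  by rewrite /pen /perspR divr1 mulr1; field; rewrite gt_eqF.
rewrite pen00 -/a in at0; rewrite pen_top -/a in at1.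
rewrite /zetaCR /d objE // deltaE -/a -!EFinD !lte_fin.
(* In each case the wrong value of z_i forces objR x z > zbar. *)
split=> hlt; have [[zi|zi] hxz] := xz_feas i => //; exfalso.
- have := pen1_lb mu gamma_gt0 (x i ord0) a; rewrite zi in lb; lra.
- have xi0 : x i ord0 = 0%R by move: hxz; rewrite zi subr0 mulr1.
  rewrite zi xi0 pen00 in lb; lra.
Qed.
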